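(* Let $G$ and $H$ be nontrivial connected graphs with $\gamma_t(H)=2$. Then $\gamma_t(G)=\gamma_t(G\Box H)$ if and only if one of the following holds: (i) $G$ is isomorphic to $K_2$ and $\gamma(H)=1$; (ii) $H$ is isomorphic to $K_2$ and $G\in\mathcal{F}_1\cup\mathcal{F}_2\cup\mathcal{F}_3$.
   Context: All graphs are finite, simple, undirected. $\gamma(G)$ is the domination number and $\gamma_t(G)$ the total domination number (minimum size of a set $S$ with $N_G(S)=V(G)$, $N_G(S)$ the union of open neighborhoods of vertices of $S$). $G\Box H$ is the Cartesian product: vertex set $V(G)\times V(H)$, with $(u_1,v_1)\sim(u_2,v_2)$ iff either $u_1=u_2$ and $v_1v_2\in E(H)$, or $v_1=v_2$ and $u_1u_2\in E(G)$. $G[X]$ denotes the induced subgraph. The families are: $\mathcal{F}_1$ = graphs $G$ with $\gamma_t(G)=2\gamma(G)$; $\mathcal{F}_2$ = graphs $G$ having a minimum total dominating set $D$ that can be partitioned into two nonempty subsets $D_1,D_2$ with $D_1=V(G)\setminus N_G(D_2)$ and $D_2=V(G)\setminus N_G(D_1)$; $\mathcal{F}_3$ = graphs $G$ whose vertex set can be partitioned into two nonempty subsets $V_1,V_2$ with $G[V_1]\in\mathcal{F}_1$, $G[V_2]\in\mathcal{F}_2$, and $\gamma_t(G)=\gamma_t(G[V_1])+\gamma_t(G[V_2])$. *)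

From mathcomp Require Import all_boot.
Set Implicit Arguments. Unset Strict Implicit. Unset Printing Implicit Defensive.

Section Graphs.
Variable T : finType.
Variable e : rel T.

Definition simple_graph : Prop := symmetric e /\ irreflexive e.
Definition connected_graph : Prop := forall x y : T, connect e x y.
Definition nontrivial_graph : Prop := 1 < #|T|.

Definition open_nbhd (S : {set T}) : {set T} :=
  [set v | [exists u in S, e u v]].

Definition dominating (S : {set T}) : bool :=
  [forall v, (v \in S) || [exists u in S, e u v]].

Definition total_dominating (S : {set T}) : bool :=
  open_nbhd S == [set: T].

Definition has_tds : Prop := exists S : {set T}, total_dominating S.

Definition gamma : nat :=
  \big[minn/#|T|]_(S : {set T} | dominating S) #|S|.

(* total domination number (meaningful when has_tds holds) *)
Definition gamma_t : nat :=
  \big[minn/#|T|]_(S : {set T} | total_dominating S) #|S|.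

Definition min_tds (D : {set T}) : bool :=
  total_dominating D && (#|D| == gamma_t).

Definition F1 : Prop := has_tds /\ gamma_t = 2 * gamma.

Definition F2 : Prop :=
  exists D : {set T}, min_tds D /\
    exists D1 D2 : {set T},
      [/\ D1 != set0, D2 != set0, D1 :|: D2 = D, D1 :&: D2 = set0 &
          (D1 = ~: open_nbhd D2 /\ D2 = ~: open_nbhd D1)].
End Graphs.

Definition induced (T : finType) (e : rel T) (X : {set T}) :
  rel {x : T | x \in X} := fun u v => e (val u) (val v).
Arguments induced {T} e X.

Definition F3 (T : finType) (e : rel T) : Prop :=
  exists V1 V2 : {set T},
    [/\ V1 != set0, V2 != set0, V1 :|: V2 = [set: T], V1 :&: V2 = set0 &
        [/\ F1 (induced e V1), F2 (induced e V2)
      & gamma_t e = gamma_t (induced e V1) + gamma_t (induced e V2)]].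

Definition cart (T1 T2 : finType) (e1 : rel T1) (e2 : rel T2) : rel (T1 * T2) :=
  fun p q => ((p.1 == q.1) && e2 p.2 q.2) || ((p.2 == q.2) && e1 p.1 q.1).

Definition K2 : rel 'I_2 := fun i j => i != j.

Definition graph_iso (T1 T2 : finType) (e1 : rel T1) (e2 : rel T2) : Prop :=
  exists f : T1 -> T2, bijective f /\ forall x y, e2 (f x) (f y) = e1 x y.

(* Let S be a minimum total dominating set of G □ H and U its projection to G.
   A vertex of G with no neighbour in U needs a total dominating set of H inside
   its own H-fibre, hence at least two vertices of S, and adding one neighbour of
   each such vertex to U gives a total dominating set of G.  So
   gamma_t(G) <= gamma_t(G □ H), and equality makes all these estimates tight.
   If |H| >= 3, tightness leaves every fibre with at most one vertex and U a
   minimum total dominating set of G; exchanging private neighbours forces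
   U = V(G), hence G = K2, and the two fibres of S then show gamma(H) = 1.
   If H = K2 = {a, b}, write S_a, S_b for the layers of S.  The vertices of
   S_a \ S_b come in pairs of mutual private neighbours and have no neighbour
   in S_b.  If one layer contains the other, one vertex per pair gives a
   dominating set of half size (F1); disjoint layers form the partition of F2;
   otherwise the closed neighbourhood of S_a ∩ S_b and its complement form the
   partition of F3.  Conversely, each of the structures yields a total
   dominating set of G □ H of size gamma_t(G). *)

From mathcomp Require Import all_boot zify.
Set Implicit Arguments. Unset Strict Implicit. Unset Printing Implicit Defensive.

Lemma bigmin_le_cond (I : finType) (P : pred I) (F : I -> nat) x0 i :
  P i -> \big[minn/x0]_(j | P j) F j <= F i.
Proof.
move=> Pi; rewrite -big_filter.
have : i \in [seq j <- index_enum I | P j] by rewrite mem_filter Pi mem_index_enum.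
elim: [seq j <- index_enum I | P j] => // a s IH; rewrite inE big_cons.
by case/orP=> [/eqP -> | /IH]; [rewrite geq_minl | rewrite geq_min => ->; rewrite orbT].
Qed.

Lemma bigmin_geq (I : finType) (P : pred I) (F : I -> nat) x0 k :
  k <= x0 -> (forall i, P i -> k <= F i) -> k <= \big[minn/x0]_(j | P j) F j.
Proof.
move=> kx0 kF; apply: (big_ind (fun m => k <= m)) => // m n km kn.
by rewrite leq_min km kn.
Qed.

Lemma bigmin_attained (I : finType) (P : pred I) (F : I -> nat) x0 :
  (exists2 i, P i & F i = x0) ->
  exists2 i, P i & F i = \big[minn/x0]_(j | P j) F j.
Proof.
move=> Px0; apply: (big_ind (fun m => exists2 i, P i & F i = m)) => //.
- move=> _ _ [i Pi <-] [j Pj <-].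
  by case: (leqP (F i) (F j)) => _; [exists i | exists j].
- by move=> i Pi; exists i.
Qed.

Lemma involution_half (T : finType) (Y : {set T}) (f : T -> T) :
  {in Y, forall y, f y \in Y} -> {in Y, forall y, f y != y} -> {in Y, involutive f} ->
  exists2 R : {set T}, 2 * #|R| <= #|Y| & {in Y, forall y, y \in R \/ f y \in R}.
Proof.
move=> fY fneq finv; pose R := [set y in Y | enum_rank y < enum_rank (f y)].
have RY : R \subset Y by apply/subsetP => y; rewrite inE => /andP[].
exists R; last first.
  move=> y yY; rewrite !inE yY fY // finv //=.
  case: (ltngtP (enum_rank y) (enum_rank (f y))) => [lt | gt | eq]; [by left | by right |].
  by have := fneq y yY; rewrite -(enum_rank_inj (val_inj eq)) eqxx.
have injR : {in R &, injective f}.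
  by move=> x y xR yR fxy; rewrite -(finv x) ?fxy ?finv // (subsetP RY).
have disj : R :&: f @: R = set0.
  apply/setP => x; rewrite in_set0; apply/negP => /setIP[xR /imsetP[y yR xE]].
  have yY := subsetP RY y yR; move: xR yR; rewrite xE !inE finv // => /andP[_ lt1] /andP[_ lt2].
  by have := ltn_trans lt1 lt2; rewrite ltnn.
rewrite mul2n -addnn -{2}(card_in_imset injR) -cardsUI disj cards0 addn0.
apply: subset_leq_card; rewrite subUset RY; apply/subsetP => _ /imsetP[y yR ->].
exact: fY (subsetP RY y yR).
Qed.

(** * Domination in a single graph *)

Section Domination.
Variables (T : finType) (e : rel T).
Hypotheses (e_sym : symmetric e) (e_irr : irreflexive e).
Implicit Types (S X D : {set T}) (u v x y z : T).

Lemma open_nbhdP S v : reflect (exists2 u, u \in S & e u v) (v \in open_nbhd e S).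
Proof.
rewrite inE; apply: (iffP existsP) => [[u /andP[uS euv]] | [u uS euv]]; exists u => //.
by rewrite uS.
Qed.

Lemma open_nbhdS S X : S \subset X -> open_nbhd e S \subset open_nbhd e X.
Proof.
move=> /subsetP SX; apply/subsetP => v /open_nbhdP[u uS euv].
by apply/open_nbhdP; exists u; rewrite ?SX.
Qed.

Lemma open_nbhdU S X : open_nbhd e (S :|: X) = open_nbhd e S :|: open_nbhd e X.
Proof.
apply/setP => v; rewrite in_setU; apply/open_nbhdP/orP.
  by case=> u; rewrite inE => /orP[] uS euv; [left | right]; apply/open_nbhdP; exists u.
by case=> /open_nbhdP[u uS euv]; exists u; rewrite // inE uS ?orbT.
Qed.

Lemma total_dominatingP S :
  reflect (forall v, exists2 u, u \in S & e u v) (total_dominating e S).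
Proof.
apply: (iffP eqP) => [NS v | NS]; first by apply/open_nbhdP; rewrite NS inE.
by apply/setP => v; rewrite in_setT; apply/open_nbhdP.
Qed.

Lemma dominatingP S :
  reflect (forall v, v \in S \/ exists2 u, u \in S & e u v) (dominating e S).
Proof.
apply: (iffP forallP) => DS v.
  by case/orP: (DS v) => [| /existsP[u /andP[]]]; [left | right; exists u].
by apply/orP; case: (DS v) => [|[u uS euv]]; [left | right; apply/existsP; exists u; rewrite uS].
Qed.

Lemma dominatingE S : dominating e S = ([set: T] \subset S :|: open_nbhd e S).
Proof.
apply/dominatingP/subsetP => [DS v _ | DS v].
  by rewrite inE; case: (DS v) => [-> | /open_nbhdP ->]; rewrite ?orbT.
by move: (DS v (in_setT v)); rewrite inE => /orP[| /open_nbhdP]; [left | right].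
Qed.

Definition isolated_free := forall v, exists u, e v u.

Definition nbr v := odflt v [pick u | e v u].

Lemma nbrP : isolated_free -> forall v, e v (nbr v).
Proof.
move=> isf v; rewrite /nbr; case: pickP => //= noadj.
by have [u] := isf v; rewrite noadj.
Qed.

Lemma total_dominating_isolated_free S : total_dominating e S -> isolated_free.
Proof. by move=> /total_dominatingP tS v; have [u _ euv] := tS v; exists u; rewrite e_sym. Qed.

Lemma total_dominating_setT : isolated_free -> total_dominating e [set: T].
Proof. by move=> isf; apply/total_dominatingP => v; exists (nbr v); rewrite // e_sym nbrP. Qed.

Lemma gamma_t_le S : total_dominating e S -> gamma_t e <= #|S|.
Proof. exact: bigmin_le_cond. Qed.

Lemma gamma_le S : dominating e S -> gamma e <= #|S|.
Proof. exact: bigmin_le_cond. Qed.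

Lemma gamma_t_attained :
  isolated_free -> exists2 S, total_dominating e S & #|S| = gamma_t e.
Proof.
move=> isf; apply: bigmin_attained.
by exists [set: T]; rewrite ?cardsT ?total_dominating_setT.
Qed.

Lemma gamma_attained : exists2 S, dominating e S & #|S| = gamma e.
Proof.
apply: bigmin_attained; exists [set: T]; rewrite ?cardsT //.
by apply/dominatingP => v; left; rewrite inE.
Qed.

Lemma gamma_t_le_double_gamma : isolated_free -> gamma_t e <= 2 * gamma e.
Proof.
move=> isf; have [X /dominatingP domX <-] := gamma_attained.
have tX : total_dominating e (X :|: nbr @: X).
  apply/total_dominatingP => v; case: (domX v) => [vX | [u uX euv]].
    by exists (nbr v); [rewrite inE imset_f ?orbT | rewrite e_sym nbrP].
  by exists u; rewrite // inE uX.
apply: leq_trans (gamma_t_le tX) _; rewrite mul2n -addnn.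
by apply: leq_trans (leq_card_setU _ _) _; rewrite leq_add2l leq_imset_card.
Qed.

Lemma F1_of_dominating X :
  isolated_free -> dominating e X -> 2 * #|X| <= gamma_t e -> F1 e.
Proof.
move=> isf domX gtX; split; first by exists [set: T]; apply: total_dominating_setT.
apply/eqP; rewrite eqn_leq gamma_t_le_double_gamma //=.
by apply: leq_trans gtX; rewrite leq_mul2l gamma_le ?orbT.
Qed.

Lemma card_total_dominating_ge2 S v : total_dominating e S -> 2 <= #|S|.
Proof.
move=> /total_dominatingP tS; have [u uS _] := tS v; have [w wS ewu] := tS u.
rewrite (cardsD1 u) uS ltnS card_gt0; apply/set0Pn; exists w.
by rewrite !inE wS andbT; apply: contraTneq ewu => ->; rewrite e_irr.
Qed.

Lemma gamma_t_ge2 : 1 < #|T| -> 2 <= gamma_t e.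
Proof.
move=> T2; have /card_gt0P[v _] := ltnW T2.
by apply: bigmin_geq => // S; apply: card_total_dominating_ge2.
Qed.

Lemma gamma_eq1P : gamma e = 1 <-> exists h, dominating e [set h].
Proof.
split=> [g1 | [h dh]].
  have [X dX] := gamma_attained; rewrite g1 => /eqP/cards1P[h Xh].
  by exists h; rewrite -Xh.
apply/eqP; rewrite eqn_leq (leq_trans (gamma_le dh)) ?cards1 //=.
have [X /dominatingP/(_ h) dX <-] := gamma_attained.
by rewrite card_gt0; apply/set0Pn; case: dX => [hX | [u uX _]]; [exists h | exists u].
Qed.

Lemma private_nbr D u : total_dominating e D -> #|D| <= gamma_t e -> u \in D ->
  exists2 z, e u z & forall d, d \in D -> e d z -> d = u.
Proof.
move=> tD minD uD.
have /existsP[z zN] : [exists z, z \notin open_nbhd e (D :\ u)].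
  rewrite -negb_forall; apply: contraTN minD => /forallP allN.
  have tDu : total_dominating e (D :\ u) by apply/eqP/setP => v; rewrite allN inE.
  by rewrite -ltnNge (cardsD1 u D) uD add1n ltnS gamma_t_le.
have onlyu d : d \in D -> e d z -> d = u.
  move=> dD edz; apply/eqP; apply: contraNT zN => du.
  by apply/open_nbhdP; exists d; rewrite // !inE du.
have [d dD edz] := total_dominatingP _ tD z.
by exists z => //; rewrite -(onlyu d dD edz).
Qed.

Lemma F2_of_split D1 D2 : D1 != set0 -> D2 != set0 -> D1 :&: D2 = set0 ->
  total_dominating e (D1 :|: D2) -> #|D1 :|: D2| <= gamma_t e ->
  D1 = ~: open_nbhd e D2 -> D2 = ~: open_nbhd e D1 -> F2 e.
Proof.
move=> D1n0 D2n0 D12 tD cD eD1 eD2; exists (D1 :|: D2); split.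
  by rewrite /min_tds tD eqn_leq cD gamma_t_le.
by exists D1, D2.
Qed.

Lemma connected_isolated_free : connected_graph e -> 1 < #|T| -> isolated_free.
Proof.
move=> conn /card_gt1P[x [y [_ _ xy]]] v.
have [w wv] : exists w, w != v.
  by case: (eqVneq x v) => [<- | xv]; [exists y; rewrite eq_sym | exists x].
case/connectP: (conn v w) => [[| u p] /= ]; first by move=> _ wv'; rewrite wv' eqxx in wv.
by case/andP => evu _ _; exists u.
Qed.

(* If V is a minimum total dominating set, x and its private neighbour z are
   each other's only neighbours. *)
Lemma connected_card_le2_of_gamma_t x : connected_graph e -> isolated_free ->
  #|T| <= gamma_t e -> #|T| <= 2.
Proof.
move=> conn isf cardT; have tT := total_dominating_setT isf.
have cT : #|[set: T]| <= gamma_t e by rewrite cardsT.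
have [z exz onlyx] := private_nbr tT cT (in_setT x).
have [y ezy onlyz] := private_nbr tT cT (in_setT z).
have yx : y = x by apply: onlyx; rewrite ?in_setT // e_sym.
subst y.
have closed_xz : closed e [set x; z].
  apply: (intro_closed (sym_connect_sym e_sym)) => u v euv.
  rewrite !inE => /orP[] /eqP uE; rewrite uE e_sym in euv.
    by rewrite (onlyz v) ?in_setT ?eqxx ?orbT.
  by rewrite (onlyx v) ?in_setT ?eqxx.
have -> : #|T| = #|[set x; z]|.
  rewrite -cardsT; apply: eq_card => v; rewrite in_setT.
  by rewrite -(closed_connect closed_xz (conn x v)) !inE eqxx.
by rewrite cards2; case: (x != z).
Qed.

Lemma card2_elems x y : #|T| = 2 -> x != y -> forall z, z = x \/ z = y.
Proof.
move=> T2 xy z; case: (boolP (z \in [set x; y])); first by rewrite !inE => /orP[]/eqP; auto.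
move=> zxy; have := max_card (mem (z |: [set x; y])).
by rewrite cardsU1 zxy cards2 xy T2.
Qed.

Lemma card2_of_elems x y : x != y -> (forall z, z = x \/ z = y) -> #|T| = 2.
Proof.
move=> xy allxy; have := cards2 x y; rewrite xy => <-; rewrite -cardsT.
apply: eq_card => z.
by rewrite !inE; case: (allxy z) => ->; rewrite eqxx ?orbT.
Qed.

Lemma graph_iso_K2 : isolated_free -> #|T| = 2 -> graph_iso e K2.
Proof.
move=> isf T2.
pose f x := cast_ord T2 (enum_rank x).
pose g i := enum_val (cast_ord (esym T2) i).
have bij_f : bijective f.
  by exists g => [x | i]; rewrite /f /g ?cast_ordK ?enum_rankK ?enum_valK ?cast_ordKV.
exists f; split => // x y; rewrite /K2 (inj_eq (bij_inj bij_f)).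
case: (eqVneq x y) => [-> | xy]; first by rewrite e_irr.
have [u exu] := isf x; have ux : u != x by apply: contraTneq exu => ->; rewrite e_irr.
case: (card2_elems T2 xy u) => uE; first by rewrite uE eqxx in ux.
by rewrite -uE exu.
Qed.

Lemma graph_iso_K2P : graph_iso e K2 ->
  exists a b, [/\ a != b, e a b & forall x, x = a \/ x = b].
Proof.
case=> f [[g fK gK] ef]; pose i0 : 'I_2 := ord0; pose i1 : 'I_2 := Ordinal (isT : 1 < 2).
have g01 : g i0 != g i1 by apply: contraTneq isT => /(congr1 f); rewrite !gK.
exists (g i0), (g i1); split; rewrite -?ef ?gK //.
apply: card2_elems g01; rewrite -(card_ord 2); apply: bij_eq_card.
by exists g.
Qed.

End Domination.

(** * Induced subgraphs *)

Section Induced.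
Variables (T : finType) (e : rel T) (A : {set T}).
Local Notation sA := {x : T | x \in A}.
Local Notation eA := (induced e A).
Implicit Types (B : {set T}) (X : {set sA}).

Definition restr B : {set sA} := [set x | val x \in B].

Lemma in_restr B x : (x \in restr B) = (val x \in B).
Proof. by rewrite inE. Qed.

Lemma eq_restr B1 B2 : {in A, B1 =i B2} -> restr B1 = restr B2.
Proof. by move=> eqB; apply/setP => x; rewrite !in_restr eqB ?(valP x). Qed.

Lemma restrU B1 B2 : restr (B1 :|: B2) = restr B1 :|: restr B2.
Proof. by apply/setP => x; rewrite !inE. Qed.

Lemma restrI B1 B2 : restr (B1 :&: B2) = restr B1 :&: restr B2.
Proof. by apply/setP => x; rewrite !inE. Qed.

Lemma restrC B : restr (~: B) = ~: restr B.
Proof. by apply/setP => x; rewrite !inE. Qed.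

Lemma restr_val X : restr (val @: X) = X.
Proof. by apply/setP => x; rewrite in_restr (mem_imset _ _ val_inj). Qed.

Lemma val_imset_subset X : val @: X \subset A.
Proof. by apply/subsetP => _ /imsetP[x _ ->]; apply: valP. Qed.

Lemma card_restr B : B \subset A -> #|restr B| = #|B|.
Proof.
move=> BA; rewrite -(card_imset _ val_inj); apply: eq_card => v.
apply/imsetP/idP => [[x] | vB]; first by rewrite in_restr => xB ->.
by exists (exist _ v (subsetP BA v vB)); rewrite ?in_restr.
Qed.

Lemma restr_eqT B : (restr B == setT) = (A \subset B).
Proof.
apply/eqP/subsetP => [rT v vA | AB]; last by apply/setP => x; rewrite in_restr in_setT AB ?(valP x).
by have := in_setT (exist _ v vA); rewrite -rT in_restr.
Qed.

Lemma open_nbhd_restr B : B \subset A -> open_nbhd eA (restr B) = restr (open_nbhd e B).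
Proof.
move=> BA; apply/setP => x; rewrite in_restr; apply/open_nbhdP/open_nbhdP.
  by case=> u; rewrite in_restr => uB eux; exists (val u).
by case=> u uB eux; exists (exist _ u (subsetP BA u uB)); rewrite ?in_restr.
Qed.

Lemma total_dominating_restr B :
  B \subset A -> total_dominating eA (restr B) = (A \subset open_nbhd e B).
Proof. by move=> BA; rewrite /total_dominating open_nbhd_restr ?restr_eqT. Qed.

Lemma dominating_restr B :
  B \subset A -> dominating eA (restr B) = (A \subset B :|: open_nbhd e B).
Proof. by move=> BA; rewrite dominatingE subTset open_nbhd_restr // -restrU restr_eqT. Qed.

Lemma total_dominating_induced X :
  total_dominating eA X = (A \subset open_nbhd e (val @: X)).
Proof. by rewrite -{1}(restr_val X) total_dominating_restr ?val_imset_subset. Qed.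

Lemma dominating_induced X :
  dominating eA X -> A \subset val @: X :|: open_nbhd e (val @: X).
Proof. by rewrite -{1}(restr_val X) dominating_restr ?val_imset_subset. Qed.

Lemma compl_nbhd_induced X1 X2 :
  X1 = ~: open_nbhd eA X2 -> A \subset val @: X1 :|: open_nbhd e (val @: X2).
Proof.
rewrite -{1}(restr_val X2) open_nbhd_restr ?val_imset_subset // -restrC => X1E.
apply/subsetP => v vA; rewrite in_setU orbC; case: (boolP (v \in open_nbhd _ _)) => //= vN.
by apply/imsetP; exists (exist _ v vA); rewrite // X1E in_restr inE vN.
Qed.

Lemma induced_sym : symmetric e -> symmetric eA.
Proof. by move=> e_sym x y; apply: e_sym. Qed.

End Induced.

Section InducedDomination.
Variables (T : finType) (e : rel T).
Hypothesis e_sym : symmetric e.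
Implicit Types (A X : {set T}).

Lemma isolated_free_closed_nbhd X :
  isolated_free e -> isolated_free (induced e (X :|: open_nbhd e X)).
Proof.
move=> isf [v vC].
have [u uC evu] : exists2 u, u \in X :|: open_nbhd e X & e v u.
  case/setUP: vC => [vX | /open_nbhdP[u uX euv]]; last by exists u; rewrite ?inE ?uX // e_sym.
  exists (nbr e v); rewrite ?(nbrP isf) // in_setU; apply/orP; right.
  by apply/open_nbhdP; exists v; rewrite ?(nbrP isf).
by exists (exist _ u uC).
Qed.

Lemma dominating_closed_nbhd X :
  dominating (induced e (X :|: open_nbhd e X)) (restr _ X).
Proof. by rewrite dominating_restr ?subsetUl. Qed.

Lemma gamma_t_le_induced_split A :
  isolated_free (induced e A) -> isolated_free (induced e (~: A)) ->
  gamma_t e <= gamma_t (induced e A) + gamma_t (induced e (~: A)).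
Proof.
move=> isfA isfC.
have [M1 tM1 <-] := gamma_t_attained (induced_sym (A := A) e_sym) isfA.
have [M2 tM2 <-] := gamma_t_attained (induced_sym (A := ~: A) e_sym) isfC.
rewrite total_dominating_induced in tM1; rewrite total_dominating_induced in tM2.
have tM : total_dominating e (val @: M1 :|: val @: M2).
  by rewrite /total_dominating -subTset open_nbhdU -(setUCr A) setUSS.
apply: leq_trans (gamma_t_le tM) _; apply: leq_trans (leq_card_setU _ _) _.
by rewrite leq_add ?leq_imset_card.
Qed.

End InducedDomination.

(** * Total domination in G □ H *)

Section CartesianProduct.
Variables (TG TH : finType) (eG : rel TG) (eH : rel TH).
Local Notation P := (cart eG eH).
Implicit Types (S : {set TG * TH}) (X : {set TG}) (Y : {set TH}).

Lemma cart_sym : symmetric eG -> symmetric eH -> symmetric P.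
Proof. by move=> sG sH [g h] [g' h']; rewrite /cart /= sG sH (eq_sym g) (eq_sym h). Qed.

Lemma cart_isolated_free : isolated_free eH -> isolated_free P.
Proof.
by move=> isfH [g h]; have [h' ehh'] := isfH h; exists (g, h'); rewrite /cart /= eqxx ehh'.
Qed.

Lemma cart_total_dominatingP S :
  reflect (forall g h, (exists2 h', (g, h') \in S & eH h' h) \/
                       (exists2 g', (g', h) \in S & eG g' g))
          (total_dominating P S).
Proof.
apply: (iffP (total_dominatingP _ _)) => [NS g h | NS [g h]].
  have [[g' h'] uS] := NS (g, h).
  rewrite /cart /= => /orP[/andP[/eqP <- ?] | /andP[/eqP <- ?]].
    by left; exists h'.
  by right; exists g'.
case: (NS g h) => [[h' hS ehh] | [g' gS egg]]; [exists (g, h') | exists (g', h)];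
  by rewrite // /cart /= eqxx ?ehh ?egg ?orbT.
Qed.

Lemma cart_nbhd_setXT X : symmetric eH -> isolated_free eH ->
  setX (X :|: open_nbhd eG X) setT \subset open_nbhd P (setX X setT).
Proof.
move=> sH isfH; apply/subsetP => -[g k]; rewrite in_setX in_setT andbT => gC; apply/open_nbhdP.
case/setUP: gC => [gX | /open_nbhdP[u uX eug]].
  by exists (g, nbr eH k); rewrite ?in_setX ?in_setT ?gX // /cart /= eqxx sH (nbrP isfH).
by exists (u, k); rewrite ?in_setX ?in_setT ?uX // /cart /= eqxx eug orbT.
Qed.

Lemma cart_total_dominating_setTX Y : symmetric eG -> isolated_free eG ->
  dominating eH Y -> total_dominating P (setX setT Y).
Proof.
move=> sG isfG /dominatingP domY; apply/cart_total_dominatingP => g k.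
case: (domY k) => [kY | [u uY euk]]; last by left; exists u; rewrite ?in_setX ?in_setT.
by right; exists (nbr eG g); rewrite ?in_setX ?in_setT // sG (nbrP isfG).
Qed.

Lemma cart_nbhd_edge a b (D1 D2 : {set TG}) : eH b a ->
  setX (D2 :|: open_nbhd eG D1) [set a] \subset
  open_nbhd P (setX D1 [set a] :|: setX D2 [set b]).
Proof.
move=> eba; apply/subsetP => -[g k]; rewrite in_setX in_set1 => /andP[gC /eqP->{k}].
apply/open_nbhdP; case/setUP: gC => [gD2 | /open_nbhdP[u uD1 eug]].
  by exists (g, b); rewrite ?inE ?gD2 ?eqxx ?orbT // /cart /= eqxx eba.
by exists (u, a); rewrite ?inE ?uD1 ?eqxx // /cart /= eqxx eug orbT.
Qed.

End CartesianProduct.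

Section CartesianK2Upper.
Variables (TG TH : finType) (eG : rel TG) (eH : rel TH) (a b : TH).
Hypotheses (eH_sym : symmetric eH) (ab : a != b) (eab : eH a b).
Hypothesis allab : forall h, h = a \/ h = b.
Local Notation P := (cart eG eH).

Let eba : eH b a. Proof. by rewrite eH_sym. Qed.

Let eH_isf : isolated_free eH.
Proof. by move=> h; case: (allab h) => ->; [exists b | exists a]. Qed.

Lemma gamma_t_cart_K2_F1 : F1 eG -> gamma_t P <= gamma_t eG.
Proof.
case=> _ ->; have [X dX <-] := gamma_attained eG; rewrite dominatingE in dX.
have tX : total_dominating P (setX X setT).
  apply/eqP/setP => -[g k]; rewrite in_setT.
  apply: (subsetP (cart_nbhd_setXT _ _ eH_sym eH_isf)).
  by rewrite in_setX in_setT andbT (subsetP dX) ?in_setT.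
by apply: leq_trans (gamma_t_le tX) _; rewrite cardsX cardsT (card2_of_elems ab allab) mulnC.
Qed.

Lemma gamma_t_cart_K2_F2 : F2 eG -> gamma_t P <= gamma_t eG.
Proof.
case=> D [/andP[_ /eqP <-] [D1 [D2 [_ _ <- D12 [D1E D2E]]]]].
have tS : total_dominating P (setX D1 [set a] :|: setX D2 [set b]).
  apply/eqP/setP => -[g k]; rewrite in_setT; case: (allab k) => ->.
    apply: (subsetP (cart_nbhd_edge _ _ _ eba)).
    by rewrite in_setX in_set1 eqxx andbT in_setU {1}D2E in_setC; case: (_ \in _).
  rewrite setUC; apply: (subsetP (cart_nbhd_edge _ _ _ eab)).
  by rewrite in_setX in_set1 eqxx andbT in_setU {1}D1E in_setC; case: (_ \in _).
apply: leq_trans (gamma_t_le tS) _; apply: leq_trans (leq_card_setU _ _) _.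
by rewrite !cardsX !cards1 !muln1 cardsU D12 cards0 subn0.
Qed.

Lemma gamma_t_cart_K2_F3 : F3 eG -> gamma_t P <= gamma_t eG.
Proof.
case=> V1 [V2 [_ _ V12 _ [[_ ->] [D [/andP[_ /eqP <-] F2V2] ->]]]].
case: F2V2 => D1 [D2 [_ _ <- D12 [D1E D2E]]].
have [X dX <-] := gamma_attained (induced eG V1).
pose S1 := setX (val @: X) [set: TH].
pose S2 := setX (val @: D1) [set a] :|: setX (val @: D2) [set b].
have tS : total_dominating P (S1 :|: S2).
  apply/eqP/setP => -[g k]; rewrite in_setT.
  have : g \in V1 :|: V2 by rewrite V12.
  case/setUP => [gV1 | gV2].
    apply: (subsetP (open_nbhdS P (subsetUl S1 S2))).
    apply: (subsetP (cart_nbhd_setXT _ _ eH_sym eH_isf)).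
    by rewrite in_setX in_setT andbT (subsetP (dominating_induced dX)).
  apply: (subsetP (open_nbhdS P (subsetUr S1 S2))); case: (allab k) => ->.
    apply: (subsetP (cart_nbhd_edge _ _ _ eba)).
    by rewrite in_setX in_set1 eqxx andbT (subsetP (compl_nbhd_induced D2E)).
  rewrite /S2 setUC; apply: (subsetP (cart_nbhd_edge _ _ _ eab)).
  by rewrite in_setX in_set1 eqxx andbT (subsetP (compl_nbhd_induced D1E)).
apply: leq_trans (gamma_t_le tS) _; apply: leq_trans (leq_card_setU _ _) _.
rewrite /S1 /S2 cardsX cardsT (card2_of_elems ab allab) (cardsU D1) D12 cards0 subn0.
rewrite mulnC.
apply: leq_add; first by rewrite leq_mul2l leq_imset_card orbT.
apply: leq_trans (leq_card_setU _ _) _; rewrite !cardsX !cards1 !muln1.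
by rewrite leq_add ?leq_imset_card.
Qed.

End CartesianK2Upper.

Section ShadowOfTds.
Variables (TG TH : finType) (eG : rel TG) (eH : rel TH).
Hypotheses (eG_sym : symmetric eG) (eG_irr : irreflexive eG) (eG_isf : isolated_free eG).
Hypothesis eH_irr : irreflexive eH.
Variable k0 : TH.
Variable S : {set TG * TH}.
Hypothesis S_tds : total_dominating (cart eG eH) S.
Implicit Types (g u v w : TG) (h k : TH).

Let S_dom := elimT (cart_total_dominatingP eG eH S) S_tds.

(* [shadow] is the projection of S to G; over an [exposed] vertex the fibre of S
   must totally dominate H by itself.  [core] is the part V1 of F3. *)
Definition fibre g := [set h | (g, h) \in S].
Definition layer h := [set g | (g, h) \in S].
Definition shadow := [set g | fibre g != set0].
Definition exposed := ~: open_nbhd eG shadow.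
Definition shadow_tds := shadow :|: nbr eG @: exposed.
Definition core := exposed :|: open_nbhd eG exposed.
(* For S minimum and H = K2, [partner u] is the unique neighbour of u in
   [shadow_tds] (see [partnerP]). *)
Definition partner u := odflt u [pick z in shadow_tds | eG z u].

Lemma shadowP g : reflect (exists h, (g, h) \in S) (g \in shadow).
Proof. by rewrite inE; apply: (iffP (set0Pn _)) => -[h]; rewrite ?inE; exists h; rewrite ?inE. Qed.

Lemma in_shadow g h : (g, h) \in S -> g \in shadow.
Proof. by move=> gh; apply/shadowP; exists h. Qed.

Lemma exposed_shadow_nbr w g : w \in exposed -> g \in shadow -> eG g w = false.
Proof. by rewrite inE => wN gU; apply: contraNF wN => egw; apply/open_nbhdP; exists g. Qed.

Lemma shadow_cover v h :
  v \notin shadow -> exists2 g, g \in shadow & eG g v /\ (g, h) \in S.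
Proof.
move=> vU; case: (S_dom v h) => [[h' vh' _] | [g gh egv]].
  by rewrite (in_shadow vh') in vU.
by exists g; rewrite ?(in_shadow gh).
Qed.

Lemma layer_sub_shadow_tds h : layer h \subset shadow_tds.
Proof. by apply/subsetP => g; rewrite inE => /in_shadow gU; rewrite in_setU gU. Qed.

Lemma notin_core v : v \notin core -> v \notin exposed /\ v \notin open_nbhd eG exposed.
Proof. by rewrite in_setU negb_or => /andP. Qed.

Lemma shadow_notin_nbhd_exposed g : g \in shadow -> g \notin open_nbhd eG exposed.
Proof.
by move=> gU; apply/negP => /open_nbhdP[w wW ewg]; rewrite eG_sym (exposed_shadow_nbr wW gU) in ewg.
Qed.

Lemma exposed0_total_dominating : exposed = set0 -> total_dominating eG shadow.
Proof. by move=> W0; apply/eqP; rewrite -[open_nbhd _ _]setCK -/exposed W0 setC0. Qed.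

Lemma partner_eq v w : w \in shadow_tds -> eG w v ->
  (forall d, d \in shadow_tds -> eG d v -> d = w) -> partner v = w.
Proof.
move=> wD ewv onlyw; rewrite /partner; case: pickP => [d /andP[dD edv] | none] /=.
  exact: onlyw.
by move: (none w); rewrite wD ewv.
Qed.

Lemma fibres_cover v a b : v \notin shadow ->
  (forall g, g \in shadow -> eG g v -> g = a \/ g = b) -> fibre a :|: fibre b = setT.
Proof.
move=> vU onlyab; apply/setP => h; rewrite in_setT; have [g gU [egv gh]] := shadow_cover h vU.
by rewrite in_setU !inE; case: (onlyab g gU egv) => <-; rewrite gh ?orbT.
Qed.

Lemma fibre_exposed_tds w : w \in exposed -> total_dominating eH (fibre w).
Proof.
move=> wW; apply/total_dominatingP => h.
case: (S_dom w h) => [[h' wh' eh'h] | [g gh egw]]; first by exists h'; rewrite ?inE.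
by rewrite (exposed_shadow_nbr wW (in_shadow gh)) in egw.
Qed.

Lemma exposed_sub_shadow : exposed \subset shadow.
Proof.
apply/subsetP => w wW; have /total_dominatingP/(_ k0)[h wh _] := fibre_exposed_tds wW.
by apply/shadowP; exists h; rewrite inE in wh.
Qed.

Lemma total_dominating_shadow_tds : total_dominating eG shadow_tds.
Proof.
apply/total_dominatingP => v; case: (boolP (v \in exposed)) => [vW | ].
  by exists (nbr eG v); [rewrite inE imset_f ?orbT | rewrite eG_sym (nbrP eG_isf)].
by rewrite inE negbK => /open_nbhdP[u uU euv]; exists u; rewrite // inE uU.
Qed.

Lemma card_shadow_tds : #|shadow_tds| <= #|shadow| + #|exposed|.
Proof. by apply: leq_trans (leq_card_setU _ _) _; rewrite leq_add2l leq_imset_card. Qed.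

Lemma card_fibre_ge g : (g \in shadow) + (g \in exposed) <= #|fibre g|.
Proof.
case: (boolP (g \in exposed)) => [gW | _]; last by rewrite addn0 inE -card_gt0; case: #|_|.
have := card_total_dominating_ge2 eH_irr k0 (fibre_exposed_tds gW).
by rewrite (subsetP exposed_sub_shadow g gW).
Qed.

Lemma card_cart_tds : #|S| = \sum_g #|fibre g|.
Proof.
transitivity (\sum_g \sum_(h | (g, h) \in S) 1).
  by rewrite pair_big_dep /= -sum1_card; apply: eq_bigl => -[g h].
by apply: eq_bigr => g _; rewrite -sum1_card; apply: eq_bigl => h; rewrite inE.
Qed.

Lemma card_shadow_exposed :
  #|shadow| + #|exposed| = \sum_g ((g \in shadow) + (g \in exposed)).
Proof. by rewrite big_split -!sum1_card; congr (_ + _); rewrite big_mkcond. Qed.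

Lemma card_shadow_exposed_le : #|shadow| + #|exposed| <= #|S|.
Proof.
rewrite card_shadow_exposed card_cart_tds.
by apply: leq_sum => g _; apply: card_fibre_ge.
Qed.

Lemma gamma_t_le_cart_tds : gamma_t eG <= #|S|.
Proof.
exact: leq_trans (gamma_t_le total_dominating_shadow_tds)
                 (leq_trans card_shadow_tds card_shadow_exposed_le).
Qed.

Section Tight.
Hypothesis S_min : #|S| <= gamma_t eG.

Lemma card_shadow_tds_min : #|shadow_tds| <= gamma_t eG.
Proof. exact: leq_trans card_shadow_tds (leq_trans card_shadow_exposed_le S_min). Qed.

Lemma card_fibre g : #|fibre g| = (g \in shadow) + (g \in exposed).
Proof.
have sums_eq : \sum_g ((g \in shadow) + (g \in exposed)) = \sum_g #|fibre g|.
  apply/anti_leq/andP; split; first by apply: leq_sum => h _; apply: card_fibre_ge.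
  rewrite -card_cart_tds -card_shadow_exposed; apply: leq_trans S_min _.
  exact: leq_trans (gamma_t_le total_dominating_shadow_tds) card_shadow_tds.
have := (leqif_sum (fun g (_ : true) => leqif_eq (card_fibre_ge g))).2.
by rewrite sums_eq eqxx => /esym/forall_inP/(_ g isT)/eqP.
Qed.

Section LargeFactor.
Hypothesis TH_large : 2 < #|TH|.

(* Deleting an exposed w from [shadow_tds] leaves a TDS: a vertex dominated only
   through w lies outside the shadow, so all of H would lie in the fibre over w,
   which has only two vertices. *)
Lemma exposed0 : exposed = set0.
Proof.
apply/eqP; apply/negPn/negP => /set0Pn[w wW].
have wU : w \in shadow := subsetP exposed_sub_shadow w wW.
have wD : w \in shadow_tds by rewrite inE wU.
suff tD : total_dominating eG (shadow_tds :\ w).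
  have := leq_trans card_shadow_tds_min (gamma_t_le tD).
  by rewrite (cardsD1 w shadow_tds) wD add1n ltnn.
apply/total_dominatingP => v.
have [d dD edv] := total_dominatingP _ _ total_dominating_shadow_tds v.
case: (eqVneq d w) => [dw | dw]; last by exists d; rewrite // in_setD1 dw dD.
subst d; case: (boolP [exists g in shadow :\ w, eG g v]) => [/exists_inP[g gU egv] | none].
  by case/setD1P: gU => gw gU; exists g; rewrite // in_setD1 gw in_setU gU.
have vU : v \notin shadow by apply: contraTN edv => vU; rewrite eG_sym (exposed_shadow_nbr wW vU).
have onlyw g : g \in shadow -> eG g v -> g = w \/ g = w.
  move=> gU egv; left; apply: contraNeq none => gw.
  by apply/exists_inP; exists g; rewrite // in_setD1 gw.
have := fibres_cover vU onlyw; rewrite setUid => fibreT.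
by move: TH_large; rewrite -cardsT -fibreT card_fibre wU wW.
Qed.

Lemma card_fibre_le1 g : #|fibre g| <= 1.
Proof. by rewrite card_fibre exposed0 in_set0 addn0 leq_b1. Qed.

Lemma fibre_uniq g h h' : (g, h) \in S -> (g, h') \in S -> h = h'.
Proof. by move=> gh gh'; apply: (card_le1_eqP (card_fibre_le1 g)); rewrite inE. Qed.

Lemma total_dominating_shadow : total_dominating eG shadow.
Proof. exact: exposed0_total_dominating exposed0. Qed.

Lemma card_shadow_min : #|shadow| <= gamma_t eG.
Proof.
apply: leq_trans card_shadow_tds_min; apply: subset_leq_card.
by rewrite /shadow_tds exposed0 imset0 setU0.
Qed.

Lemma sole_shadow_nbrs v a b : v \notin shadow ->
  ~ (forall g, g \in shadow -> eG g v -> g = a \/ g = b).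
Proof.
move=> vU onlyab; have := TH_large; rewrite -cardsT -(fibres_cover vU onlyab).
apply/negP; rewrite -leqNgt.
exact: leq_trans (leq_card_setU _ _) (leq_add (card_fibre_le1 a) (card_fibre_le1 b)).
Qed.

Lemma shadow_exchange x g0 g1 p0 p1 : eG g0 x -> eG g1 x ->
  (forall d, d \in shadow -> eG d p0 -> d = g0) ->
  (forall d, d \in shadow -> eG d p1 -> d = g1) ->
  total_dominating eG ((shadow :\: [set p0; p1]) :|: [set x]).
Proof.
move=> eg0x eg1x only0 only1; apply/total_dominatingP => v.
have [d dU edv] := total_dominatingP _ _ total_dominating_shadow v.
case: (boolP (d \in [set p0; p1])) => dp; last by exists d; rewrite // in_setU in_setD dp dU.
case: (boolP (v \in shadow)) => vU.
  exists x; first by rewrite in_setU in_set1 eqxx orbT.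
  rewrite eG_sym in edv.
  case/set2P: dp => dE; subst d; first by rewrite (only0 v vU edv) eG_sym.
  by rewrite (only1 v vU edv) eG_sym.
case: (boolP [exists g in shadow :\: [set p0; p1], eG g v]) => [/exists_inP[g gD egv] | none].
  by exists g; rewrite // in_setU gD.
exfalso; apply: (sole_shadow_nbrs vU (a := p0) (b := p1)) => g gU egv.
have : g \in [set p0; p1].
  by apply: contraTT egv => gp; apply: (exists_inPn none); rewrite in_setD gp gU.
by case/set2P; [left | right].
Qed.

(* A vertex x outside the shadow has shadow neighbours g0 != g1; replacing the
   private neighbours of g0 and g1 by x would shrink the minimum TDS shadow. *)
Lemma shadowT : shadow = setT.
Proof.
apply/setP => x; rewrite in_setT; apply: contraT => xU.
have [k [k' [_ _ kk']]] := card_gt1P (ltnW TH_large).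
have [g0 g0U [eg0x g0k]] := shadow_cover k xU.
have [g1 g1U [eg1x g1k']] := shadow_cover k' xU.
have g01 : g0 != g1 by apply: contraNneq kk' => g01; apply/eqP/(fibre_uniq g0k); rewrite g01.
have [p0 eg0p0 only0] := private_nbr total_dominating_shadow card_shadow_min g0U.
have [p1 eg1p1 only1] := private_nbr total_dominating_shadow card_shadow_min g1U.
have private_in_shadow g p : (forall d, d \in shadow -> eG d p -> d = g) -> p \in shadow.
  move=> onlyg; apply: contraT => pU; case: (sole_shadow_nbrs pU (a := g) (b := g)).
  by move=> d dU edp; left; apply: onlyg.
have p01 : p0 != p1.
  by apply: contraNneq g01 => p01; apply/eqP/only1; rewrite -?p01.
have p01U : [set p0; p1] \subset shadow.
  by apply/subsetP => p /set2P[] ->; apply: private_in_shadow; [apply: only0 | apply: only1].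
have cardU := cardsID [set p0; p1] shadow; rewrite (setIidPr p01U) cards2 p01 in cardU.
have tD := shadow_exchange eg0x eg1x only0 only1.
have : #|(shadow :\: [set p0; p1]) :|: [set x]| < #|shadow|.
  rewrite -cardU; apply: leq_ltn_trans (leq_card_setU _ _) _.
  by rewrite cards1 addnC ltn_add2r.
by rewrite ltnNge (leq_trans card_shadow_min (gamma_t_le tD)).
Qed.

Lemma cart_tight_large_factor :
  connected_graph eG -> 1 < #|TG| -> #|TG| = 2 /\ gamma eH = 1.
Proof.
move=> conn TG2; have /card_gt1P[g [z [_ _ gz]]] := TG2.
have cardTG : #|TG| = 2.
  apply/eqP; rewrite eqn_leq TG2 andbT.
  apply: (connected_card_le2_of_gamma_t eG_sym g conn eG_isf).
  by rewrite -cardsT -shadowT card_shadow_min.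
split=> //; have onlyz g' : eG g' g -> g' = z.
  by case: (card2_elems cardTG gz g') => // ->; rewrite eG_irr.
have [h gh] : exists h, (g, h) \in S by apply/shadowP; rewrite shadowT.
have zh : (z, h) \in S.
  case: (S_dom g h) => [[h' gh' eh'h] | [g' g'h eg'g]]; last by rewrite -(onlyz g' eg'g).
  by rewrite (fibre_uniq gh' gh) eH_irr in eh'h.
apply/gamma_eq1P; exists h; apply/dominatingP => k.
case: (S_dom g k) => [[h' gh' eh'k] | [g' g'k eg'g]].
  by right; exists h'; rewrite // inE (fibre_uniq gh' gh).
by left; rewrite inE (fibre_uniq zh (_ : (z, k) \in S)) // -(onlyz g' eg'g).
Qed.

End LargeFactor.

Lemma layer_dom a b : (forall h, h = a \/ h = b) ->
  forall g, (g, b) \in S \/ exists2 u, u \in layer a & eG u g.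
Proof.
move=> allab g; case: (S_dom g a) => [[h gh eha] | [u ua eug]].
  by case: (allab h) => hE; [rewrite hE eH_irr in eha | left; rewrite -hE].
by right; exists u; rewrite ?inE.
Qed.

Section K2Factor.
Variables a b : TH.
Hypotheses (ab : a != b) (allab : forall h, h = a \/ h = b).
Let allba : forall h, h = b \/ h = a.
Proof. by move=> h; case: (allab h); [right | left]. Qed.

Lemma shadow_layers : shadow = layer a :|: layer b.
Proof.
apply/setP => g; rewrite in_setU [g \in layer a]inE [g \in layer b]inE.
apply/shadowP/orP => [[h gh] | [ga | gb]].
  by case: (allab h) => <-; [left | right].
by exists a. by exists b.
Qed.

Lemma exposed_layers : exposed = layer a :&: layer b.
Proof.
apply/setP => g; rewrite in_setI; apply/idP/andP => [gW | [ga gb]].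
  have fibE : fibre g =i [set a; b].
    apply/subset_cardP; first by rewrite cards2 ab card_fibre gW (subsetP exposed_sub_shadow g gW).
    by apply/subsetP => h _; rewrite !inE; case: (allab h) => ->; rewrite eqxx ?orbT.
  by split; [move: (fibE a) | move: (fibE b)]; rewrite !inE eqxx ?orbT /= => ->.
have : 2 <= #|fibre g|.
  apply: leq_trans (_ : 2 <= #|[set a; b]|) _; first by rewrite cards2 ab.
  apply: subset_leq_card; apply/subsetP => h /set2P[] ->; rewrite inE.
    by rewrite inE in ga.
  by rewrite inE in gb.
have gU : g \in shadow by rewrite shadow_layers in_setU ga.
by rewrite card_fibre gU; case: (g \in exposed).
Qed.

Lemma card_layers : #|S| = #|layer a| + #|layer b|.
Proof.
have -> : S = setX (layer a) [set a] :|: setX (layer b) [set b].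
  apply/setP => -[g h]; rewrite in_setU !in_setX !in_set1 !inE /=.
  by case: (allab h) => ->; rewrite eqxx ?(negbTE ab) 1?eq_sym ?(negbTE ab) ?andbT ?andbF ?orbF.
rewrite cardsU; suff -> : setX (layer a) [set a] :&: setX (layer b) [set b] = set0.
  by rewrite cards0 subn0 !cardsX !cards1 !muln1.
apply/setP => -[g h]; rewrite !inE /=; apply/negP => /andP[/andP[_ /eqP ->] /andP[_ /eqP]].
by apply/eqP.
Qed.

Lemma card_cart_K2 :
  #|S| = 2 * #|exposed| + #|layer a :\: layer b| + #|layer b :\: layer a|.
Proof.
rewrite card_layers -(cardsID (layer b) (layer a)) -(cardsID (layer a) (layer b)).
by rewrite exposed_layers [layer b :&: _]setIC mul2n -addnn; lia.
Qed.

Lemma private_in_layer u z : u \in layer a :\: layer b -> eG u z ->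
  (forall d, d \in shadow_tds -> eG d z -> d = u) -> z \in layer a :\: layer b.
Proof.
case/setDP; rewrite !inE => ua ub euz onlyu.
have za : (z, a) \in S.
  case: (layer_dom allba z) => [// | [s sb esz]].
  have su := onlyu s (subsetP (layer_sub_shadow_tds b) s sb) esz.
  by rewrite su inE (negbTE ub) in sb.
have zb : (z, b) \notin S.
  apply: contraTN euz => zb; rewrite (exposed_shadow_nbr _ (in_shadow ua)) //.
  by rewrite exposed_layers in_setI !inE za zb.
by rewrite za zb.
Qed.

Lemma partnerP u : u \in layer a :\: layer b ->
  [/\ partner u \in layer a :\: layer b, eG u (partner u), partner (partner u) = u
    & forall d, d \in shadow_tds -> eG d u -> d = partner u].
Proof.
move=> uY; have layer_tds v : v \in layer a :\: layer b -> v \in shadow_tds.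
  by case/setDP => va _; apply: (subsetP (layer_sub_shadow_tds a)).
have [z euz onlyu] := private_nbr total_dominating_shadow_tds card_shadow_tds_min (layer_tds u uY).
have zY := private_in_layer uY euz onlyu.
have [y ezy onlyz] := private_nbr total_dominating_shadow_tds card_shadow_tds_min (layer_tds z zY).
have yu : y = u.
  by apply: onlyu; rewrite 1?eG_sym // layer_tds // (private_in_layer zY ezy onlyz).
subst y; have pz : partner z = u by apply: partner_eq; rewrite ?layer_tds.
have pu : partner u = z by apply: partner_eq; rewrite ?layer_tds // eG_sym.
by rewrite pu pz; split.
Qed.

Lemma no_cross_edge v s : v \in layer a :\: layer b -> s \in layer b -> eG s v = false.
Proof.
move=> vY sb; have [/setDP[_ pb] _ _ onlyp] := partnerP vY.
have sD := subsetP (layer_sub_shadow_tds b) s sb.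
by apply: contraTF sb => esv; rewrite (onlyp s sD esv).
Qed.

Lemma layer_diffE v : v \notin exposed -> v \notin open_nbhd eG exposed ->
  (v \in layer a :\: layer b) = (v \notin open_nbhd eG (layer b :\: layer a)).
Proof.
move=> vW vN; apply/idP/idP => [vY | vNb].
  by apply/negP => /open_nbhdP[s /setDP[sb _] esv]; rewrite (no_cross_edge vY sb) in esv.
have [va | [u ub euv]] := layer_dom allba v.
  rewrite in_setD [v \in layer a]inE va andbT; apply: contra vW => vb.
  by rewrite exposed_layers in_setI vb inE va.
case: (boolP (u \in layer a)) => ua.
  by case/negP: vN; apply/open_nbhdP; exists u; rewrite // exposed_layers in_setI ua.
by case/negP: vNb; apply/open_nbhdP; exists u; rewrite // in_setD ua.
Qed.

Lemma layer_diff_noncore : layer a :\: layer b \subset ~: core.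
Proof.
apply/subsetP => y /setDP[ya yb]; rewrite in_setC in_setU negb_or.
rewrite shadow_notin_nbhd_exposed ?andbT ?shadow_layers ?in_setU ?ya //.
by rewrite exposed_layers in_setI (negbTE yb) andbF.
Qed.

End K2Factor.

Section K2Cases.
Variables a b : TH.
Hypotheses (ab : a != b) (allab : forall h, h = a \/ h = b).
Let ba : b != a. Proof. by rewrite eq_sym. Qed.
Let allba : forall h, h = b \/ h = a.
Proof. by move=> h; case: (allab h); [right | left]. Qed.
Local Notation e1 := (induced eG core).
Local Notation e2 := (induced eG (~: core)).

Lemma cart_K2_F1 : layer b \subset layer a -> F1 eG.
Proof.
move=> sba.
have [R R_half RY] : exists2 R : {set TG}, 2 * #|R| <= #|layer a :\: layer b| &
    {in layer a :\: layer b, forall y, y \in R \/ partner y \in R}.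
  apply: involution_half => y /(partnerP ab allab)[pY eyp ppy _] //.
  by apply: contraTneq eyp => ->; rewrite eG_irr.
have dD : dominating eG (layer b :|: R).
  apply/dominatingP => v; case: (layer_dom allba v) => [va | [u ub euv]]; last first.
    by right; exists u; rewrite // in_setU ub.
  case: (boolP (v \in layer b)) => vb; first by left; rewrite in_setU vb.
  have vY : v \in layer a :\: layer b by rewrite in_setD vb inE.
  have [_ evp _ _] := partnerP ab allab vY.
  case: (RY v vY) => [vR | pR]; first by left; rewrite in_setU vR orbT.
  by right; exists (partner v); rewrite ?in_setU ?pR ?orbT // eG_sym.
apply: (F1_of_dominating eG_sym eG_isf dD); apply: leq_trans S_min.
rewrite (card_layers ab allab) -(cardsID (layer b) (layer a)) (setIidPr sba).
have : #|layer b :|: R| <= #|layer b| + #|R| := leq_card_setU _ _; lia.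
Qed.

Lemma cart_K2_F2 : exposed = set0 -> layer a != set0 -> layer b != set0 -> F2 eG.
Proof.
move=> W0 an0 bn0.
have disj : layer a :&: layer b = set0 by rewrite -(exposed_layers ab allab).
have Da : layer a :\: layer b = layer a by apply/setDidPl; rewrite -setI_eq0 disj.
have Db : layer b :\: layer a = layer b by apply/setDidPl; rewrite -setI_eq0 setIC disj.
have vW v : v \notin exposed by rewrite W0 in_set0.
have vN v : v \notin open_nbhd eG exposed.
  by rewrite W0; apply/negP => /open_nbhdP[u]; rewrite in_set0.
apply: (F2_of_split an0 bn0 disj).
- by rewrite -(shadow_layers allab) exposed0_total_dominating.
- apply: leq_trans S_min; rewrite (card_layers ab allab); exact: leq_card_setU.
- by apply/setP => v; rewrite in_setC -{1}Da (layer_diffE ab allab (vW v) (vN v)) Db.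
- by apply/setP => v; rewrite in_setC -{1}Db (layer_diffE ba allba (vW v) (vN v)) Da.
Qed.

Let layer_diffs_noncore :
  (layer a :\: layer b) :|: (layer b :\: layer a) \subset ~: core.
Proof. by rewrite subUset (layer_diff_noncore ab allab) (layer_diff_noncore ba allba). Qed.

Lemma total_dominating_noncore :
  total_dominating e2 (restr (~: core) ((layer a :\: layer b) :|: (layer b :\: layer a))).
Proof.
rewrite (total_dominating_restr _ layer_diffs_noncore).
apply/subsetP => v; rewrite in_setC => /notin_core[vW vN].
rewrite open_nbhdU in_setU; apply: contraT; rewrite negb_or => /andP[nYa nYb].
have /setDP[_ vnb] : v \in layer a :\: layer b by rewrite (layer_diffE ab allab vW vN).
have /setDP[vb _] : v \in layer b :\: layer a by rewrite (layer_diffE ba allba vW vN).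
by move: vnb; rewrite vb.
Qed.

Lemma gamma_t_core_split :
  [/\ gamma_t e1 = 2 * #|exposed|,
      gamma_t e2 = #|layer a :\: layer b| + #|layer b :\: layer a|
    & gamma_t eG = gamma_t e1 + gamma_t e2].
Proof.
have isf1 : isolated_free e1 := isolated_free_closed_nbhd eG_sym eG_isf.
have isf2 : isolated_free e2 :=
  total_dominating_isolated_free (induced_sym eG_sym) total_dominating_noncore.
have gt_split := gamma_t_le_induced_split eG_sym isf1 isf2.
have gt1 : gamma_t e1 <= 2 * #|exposed|.
  apply: leq_trans (gamma_t_le_double_gamma (induced_sym eG_sym) isf1) _.
  rewrite leq_mul2l -(card_restr (subsetUl exposed (open_nbhd eG exposed))) gamma_le ?orbT //.
  exact: dominating_closed_nbhd.
have gt2 : gamma_t e2 <= #|layer a :\: layer b| + #|layer b :\: layer a|.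
  apply: leq_trans (gamma_t_le total_dominating_noncore) _.
  by rewrite (card_restr layer_diffs_noncore) leq_card_setU.
have cS := card_cart_K2 ab allab.
by split; lia.
Qed.

Lemma cart_K2_F3 : exposed != set0 ->
  layer a :\: layer b != set0 -> layer b :\: layer a != set0 -> F3 eG.
Proof.
move=> Wn0 Yan0 Ybn0; have [gt1 gt2 gtG] := gamma_t_core_split.
have restr_noncore_neq0 (Y : {set TG}) :
    Y \subset ~: core -> Y != set0 -> restr (~: core) Y != set0.
  by move=> YC Yn0; rewrite -card_gt0 card_restr // card_gt0.
exists core, (~: core); split; rewrite ?setUCr ?setICr //.
- by case/set0Pn: Wn0 => w wW; apply/set0Pn; exists w; rewrite in_setU wW.
- case/set0Pn: Yan0 => y yY; apply/set0Pn; exists y.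
  exact: subsetP (layer_diff_noncore ab allab) y yY.
split=> //.
  apply: (F1_of_dominating (induced_sym eG_sym) (isolated_free_closed_nbhd eG_sym eG_isf)).
    exact: dominating_closed_nbhd.
  by rewrite card_restr ?subsetUl // gt1.
apply: (F2_of_split (restr_noncore_neq0 _ (layer_diff_noncore ab allab) Yan0)
                    (restr_noncore_neq0 _ (layer_diff_noncore ba allba) Ybn0)).
- rewrite -restrI; apply/setP => v; rewrite in_restr in_setI !in_setD in_set0.
  by case: (val v \in layer a); case: (val v \in layer b).
- by rewrite -restrU total_dominating_noncore.
- by rewrite -restrU (card_restr layer_diffs_noncore) gt2 leq_card_setU.
- rewrite open_nbhd_restr ?(layer_diff_noncore ba allba) // -restrC.
  apply: eq_restr => v; rewrite in_setC => /notin_core[vW vN].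
  by rewrite in_setC (layer_diffE ab allab vW vN).
- rewrite open_nbhd_restr ?(layer_diff_noncore ab allab) // -restrC.
  apply: eq_restr => v; rewrite in_setC => /notin_core[vW vN].
  by rewrite in_setC (layer_diffE ba allba vW vN).
Qed.

End K2Cases.

Lemma cart_K2_tight a b : a != b -> (forall h, h = a \/ h = b) -> F1 eG \/ F2 eG \/ F3 eG.
Proof.
move=> ab allab; have ba : b != a by rewrite eq_sym.
have allba h : h = b \/ h = a by case: (allab h); [right | left].
case: (boolP (layer b \subset layer a)) => [sba | nsba].
  by left; apply: cart_K2_F1 ab allab sba.
case: (boolP (layer a \subset layer b)) => [sab | nsab].
  by left; apply: cart_K2_F1 ba allba sab.
rewrite -setD_eq0 in nsba; rewrite -setD_eq0 in nsab.
case: (eqVneq exposed set0) => [W0 | Wn0]; last by right; right; apply: cart_K2_F3 ab allab Wn0 _ _.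
right; left; apply: (cart_K2_F2 ab allab W0).
  by apply: contraNneq nsab => ->; rewrite set0D.
by apply: contraNneq nsba => ->; rewrite set0D.
Qed.

End Tight.
End ShadowOfTds.

Theorem theorem4 (TG TH : finType) (eG : rel TG) (eH : rel TH) :
  simple_graph eG -> simple_graph eH ->
  connected_graph eG -> connected_graph eH ->
  nontrivial_graph TG -> nontrivial_graph TH ->
  gamma_t eH = 2 ->
  (gamma_t eG = gamma_t (cart eG eH) <->
   (graph_iso eG K2 /\ gamma eH = 1) \/
   (graph_iso eH K2 /\ (F1 eG \/ F2 eG \/ F3 eG))).
Proof.
move=> [symG irrG] [symH irrH] connG connH TG2 TH2 _.
have isfG := connected_isolated_free connG TG2.
have isfH := connected_isolated_free connH TH2.
have /card_gt1P[k0 [k1 [_ _ k01]]] := TH2.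
have [S tS cS] := gamma_t_attained (cart_sym symG symH) (cart_isolated_free eG isfH).
have lower : gamma_t eG <= gamma_t (cart eG eH).
  by rewrite -cS (gamma_t_le_cart_tds symG isfG irrH k0 tS).
split=> [gtE | ].
  have S_min : #|S| <= gamma_t eG by rewrite cS gtE.
  case: (ltngtP 2 #|TH|) => [TH_large | | TH_eq2]; last 1 first.
  - right; split; first exact: graph_iso_K2 irrH isfH (esym TH_eq2).
    exact: (cart_K2_tight symG irrG isfG irrH k0 tS S_min k01 (card2_elems (esym TH_eq2) k01)).
  - left; have [TG_eq2 gH] :=
      cart_tight_large_factor symG irrG isfG irrH k0 tS S_min TH_large connG TG2.
    by split; first exact: graph_iso_K2 irrG isfG TG_eq2.
  - by rewrite ltnS leqNgt TH2.
move=> hyp; apply/eqP; rewrite eqn_leq lower /=.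
case: hyp => [[isoG /gamma_eq1P[h dh]] | [isoH Fs]].
  have [a [b [ab _ allab]]] := graph_iso_K2P isoG.
  apply: leq_trans (gamma_t_le (cart_total_dominating_setTX symG isfG dh)) _.
  by rewrite cardsX cardsT cards1 muln1 (card2_of_elems ab allab) gamma_t_ge2.
have [a [b [ab eab allab]]] := graph_iso_K2P isoH.
case: Fs => [| []]; [apply: (gamma_t_cart_K2_F1 symH ab eab allab)
  | apply: (gamma_t_cart_K2_F2 symH eab allab) | apply: (gamma_t_cart_K2_F3 symH ab eab allab)].
Qed.
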